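(* Let $\{A_i\}_{i\in I}$ be a family of Banach lattice algebras, $1\le p\le\infty$, and let $\ell_p(A_i)$ be their $\ell_p$-sum with coordinatewise order and product. Then \[BP(\ell_p(A_i))=\prod_{i\in I}BP(A_i),\quad BP_l(\ell_p(A_i))=\prod_{i\in I}BP_l(A_i),\quad BP_r(\ell_p(A_i))=\prod_{i\in I}BP_r(A_i)\] (intersected with $\ell_p(A_i)$, i.e. an element $(p_i)\in\ell_p(A_i)$ lies in the left-hand set iff each $p_i$ lies in the corresponding set for $A_i$). If each $A_i$ has an identity, then $OI(\ell_\infty(A_i))=\prod_{i\in I}OI(A_i)$.
   Context: A Banach lattice algebra is a real Banach lattice $A$ with an associative bilinear product making it a Banach algebra such that $xy\ge0$ whenever $x,y\ge0$; identity $e$ means a multiplicative identity with $\|e\|=1$. $L_a(x)=ax$, $R_a(x)=xa$. A band projection on a Banach lattice $X$ is an operator $P$ with $P^2=P$, $0\le P\le I_X$. $BP(A)=\{a\in A_+: L_aR_a\text{ is a band projection}\}$, $BP_l(A)=\{a\in A_+: L_a\text{ is a band projection}\}$, $BP_r(A)=\{a\in A_+: R_a\text{ is a band projection}\}$, $OI(A)=\{p: p^2=p,\ 0\le p\le e\}$. The $\ell_p$-sum $\ell_p(A_i)$ consists of families $(x_i)$ with $(\|x_i\|)\in\ell_p(I)$, normed by $\|(\|x_i\|)\|_p$; it is a Banach lattice algebra. *)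

From HB Require Import structures.
From mathcomp Require Import all_boot all_order all_algebra.
From mathcomp Require Import all_classical all_reals all_analysis.
Set Implicit Arguments. Unset Strict Implicit. Unset Printing Implicit Defensive.
Import Order.TTheory GRing.Theory Num.Theory.
Import numFieldNormedType.Exports.
Local Open Scope ring_scope.

Record BanachLatticeAlgebra (R : realType) := BLA {
  bla_V :> completeNormedModType R;
  bla_le : bla_V -> bla_V -> Prop;
  bla_join : bla_V -> bla_V -> bla_V;
  bla_mul : bla_V -> bla_V -> bla_V;
  bla_le_refl : forall x, bla_le x x;
  bla_le_trans : forall x y z, bla_le x y -> bla_le y z -> bla_le x z;
  bla_le_anti : forall x y, bla_le x y -> bla_le y x -> x = y;
  bla_le_add : forall x y z, bla_le x y -> bla_le (x + z) (y + z);
  bla_le_scale : forall (c : R) x y, 0 <= c -> bla_le x y -> bla_le (c *: x) (c *: y);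
  bla_join_l : forall x y, bla_le x (bla_join x y);
  bla_join_r : forall x y, bla_le y (bla_join x y);
  bla_join_lub : forall x y z, bla_le x z -> bla_le y z -> bla_le (bla_join x y) z;
  (* lattice norm: |x| <= |y| implies ||x|| <= ||y||, with |x| = x v (-x) *)
  bla_norm_mono : forall x y, bla_le (bla_join x (- x)) (bla_join y (- y)) ->
                    `|x| <= `|y|;
  bla_mulDl : forall x y z, bla_mul (x + y) z = bla_mul x z + bla_mul y z;
  bla_mulDr : forall x y z, bla_mul x (y + z) = bla_mul x y + bla_mul x z;
  bla_mulZl : forall (c : R) x y, bla_mul (c *: x) y = c *: bla_mul x y;
  bla_mulZr : forall (c : R) x y, bla_mul x (c *: y) = c *: bla_mul x y;
  bla_mulA : forall x y z, bla_mul x (bla_mul y z) = bla_mul (bla_mul x y) z;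
  bla_mul_norm : forall x y, `|bla_mul x y| <= `|x| * `|y|;
  bla_mul_pos : forall x y, bla_le 0 x -> bla_le 0 y -> bla_le 0 (bla_mul x y)
}.

Definition is_identity (R : realType) (A : BanachLatticeAlgebra R) (e : A) :=
  (forall x : A, bla_mul e x = x /\ bla_mul x e = x) /\ `|e| = 1.

(* The operations of an ordered algebra, used to define BP, BP_l, BP_r, OI
   uniformly, relative to a carrier subset S of an ambient type T. *)
Record ola_ops (R : realType) (T : Type) := OlaOps {
  o_zero : T;
  o_add : T -> T -> T;
  o_scale : R -> T -> T;
  o_le : T -> T -> Prop;
  o_mul : T -> T -> T
}.

Definition band_proj_on (R : realType) (T : Type) (o : ola_ops R T)
    (S : T -> Prop) (P : T -> T) : Prop :=
  (forall x, S x -> S (P x)) /\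
  (forall x y, S x -> S y -> P (o_add o x y) = o_add o (P x) (P y)) /\
  (forall (c : R) x, S x -> P (o_scale o c x) = o_scale o c (P x)) /\
  (forall x, S x -> P (P x) = P x) /\
  (forall x, S x -> o_le o (o_zero o) x ->
     o_le o (o_zero o) (P x) /\ o_le o (P x) x).

Definition BP_on (R : realType) (T : Type) (o : ola_ops R T) (S : T -> Prop) (a : T) :=
  S a /\ o_le o (o_zero o) a /\
  band_proj_on o S (fun x => o_mul o a (o_mul o x a)).
Definition BPl_on (R : realType) (T : Type) (o : ola_ops R T) (S : T -> Prop) (a : T) :=
  S a /\ o_le o (o_zero o) a /\ band_proj_on o S (fun x => o_mul o a x).
Definition BPr_on (R : realType) (T : Type) (o : ola_ops R T) (S : T -> Prop) (a : T) :=
  S a /\ o_le o (o_zero o) a /\ band_proj_on o S (fun x => o_mul o x a).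
Definition OI_on (R : realType) (T : Type) (o : ola_ops R T) (S : T -> Prop) (e p : T) :=
  S p /\ o_mul o p p = p /\ o_le o (o_zero o) p /\ o_le o p e.

Definition bla_ops (R : realType) (A : BanachLatticeAlgebra R) : ola_ops R A :=
  OlaOps 0 (fun x y => x + y) (fun c x => c *: x) (@bla_le R A) (@bla_mul R A).

Definition BP (R : realType) (A : BanachLatticeAlgebra R) (a : A) :=
  BP_on (bla_ops A) (fun _ => True) a.
Definition BPl (R : realType) (A : BanachLatticeAlgebra R) (a : A) :=
  BPl_on (bla_ops A) (fun _ => True) a.
Definition BPr (R : realType) (A : BanachLatticeAlgebra R) (a : A) :=
  BPr_on (bla_ops A) (fun _ => True) a.
Definition OI (R : realType) (A : BanachLatticeAlgebra R) (e p : A) :=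
  OI_on (bla_ops A) (fun _ => True) e p.

(* (f_i) in l_p(I), 1 <= p <= oo, for a nonnegative family f. *)
Definition lp_mem (R : realType) (I : choiceType) (p : \bar R) (f : I -> R) : Prop :=
  match p with
  | +oo%E => exists M : R, forall i, f i <= M
  | (r%:E)%E => exists M : R, forall s : seq I, uniq s ->
                  \sum_(i <- s) (f i `^ r) <= M
  | -oo%E => False
  end.

(* The l_p-sum l_p(A_i), as the subset of the product with coordinatewise
   operations, order and product. *)
Definition lp_sum (R : realType) (I : choiceType) (A : I -> BanachLatticeAlgebra R)
    (p : \bar R) (x : forall i, A i) : Prop :=
  lp_mem p (fun i => `|x i|).

Definition prod_ops (R : realType) (I : choiceType) (A : I -> BanachLatticeAlgebra R)
  : ola_ops R (forall i, A i) :=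
  OlaOps (fun i => 0) (fun x y i => x i + y i) (fun c x i => c *: x i)
    (fun x y => forall i, bla_le (x i) (y i)) (fun x y i => bla_mul (x i) (y i)).

Arguments lp_sum {R I} A p x.
Arguments prod_ops {R I} A.

From HB Require Import structures.
From mathcomp Require Import all_boot all_order all_algebra.
From mathcomp Require Import all_classical all_reals all_analysis.
Import Order.TTheory GRing.Theory Num.Theory.
Local Open Scope ring_scope.

(* Every element x of l_p(A_i) is bounded, so L_x, R_x and L_x R_x act
   coordinatewise as bounded operators and preserve l_p(A_i); hence the
   band-projection axioms on l_p(A_i) hold iff they hold in every coordinate.
   Conversely, the axioms in coordinate i are recovered by testing on elements
   supported at i alone, which lie in l_p(A_i).  For OI the only extra point is
   that 0 <= q_i <= e_i forces ||q_i|| <= ||e_i|| = 1, so q is in l_oo(A_i). *)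

Section LpMem.
Context {R : realType} {I : choiceType} {p : \bar R}.
Hypothesis p_ge1 : (1 <= p)%E.

Lemma lp_mem_single (f : I -> R) i :
  (forall j, j != i -> f j = 0) -> 0 <= f i -> lp_mem p f.
Proof.
move=> f0 fi0; case: p p_ge1 => [r| |] //= hr.
- have r_gt0 : 0 < r by rewrite (lt_le_trans ltr01) // -lee_fin.
  exists (f i `^ r) => s us.
  have fr0 j : j != i -> f j `^ r = 0 by move=> /f0 ->; rewrite powR0 // gt_eqF.
  have [si|nsi] := boolP (i \in s).
  + by rewrite (bigD1_seq i) //= big1 ?addr0.
  + rewrite big_seq_cond big1 ?powR_ge0 // => j /andP[js _]; apply: fr0.
    by apply: contraNneq nsi => <-.
- by exists (f i) => j; case: (eqVneq j i) => [->|/f0 ->].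
Qed.

Lemma lp_mem_bounded (g : I -> R) :
  (forall i, 0 <= g i) -> lp_mem p g -> exists2 K, 0 <= K & forall i, g i <= K.
Proof.
move=> g0; case: p p_ge1 => [r| |] //= hr [M HM].
- have r_ge1 : 1 <= r by rewrite -lee_fin.
  exists (Num.max 1 M) => [|i]; first by rewrite le_max ler01.
  have [gi1|gi1] := leP (g i) 1; first by rewrite le_max gi1.
  rewrite le_max; apply/orP; right.
  apply: le_trans (le1r_powR (ltW gi1) r_ge1) _.
  by have := HM [:: i] isT; rewrite big_seq1.
- by exists (Num.max 0 M) => [|i]; rewrite le_max ?lexx ?HM ?orbT.
Qed.

Lemma lp_mem_dominated (f g : I -> R) C : 0 <= C ->
  (forall i, 0 <= f i <= C * g i) -> (forall i, 0 <= g i) ->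
  lp_mem p g -> lp_mem p f.
Proof.
move=> C0 fg g0; case: p p_ge1 => [r| |] //= hr [M HM].
- have r0 : 0 <= r by rewrite (le_trans ler01) // -lee_fin.
  exists (C `^ r * M) => s us.
  apply: (@le_trans _ _ (\sum_(i <- s) C `^ r * g i `^ r)).
    apply: ler_sum => i _; have /andP[fi0 fiC] := fg i.
    by rewrite -powRM // ge0_ler_powR ?nnegrE ?mulr_ge0.
  by rewrite -mulr_sumr ler_wpM2l ?powR_ge0 ?HM.
- exists (C * M) => i; have /andP[_ fiC] := fg i.
  by rewrite (le_trans fiC) ?ler_wpM2l.
Qed.

End LpMem.

Lemma bla_norm_le_of_pos (R : realType) (B : BanachLatticeAlgebra R) (q e : B) :
  bla_le 0 q -> bla_le q e -> `|q| <= `|e|.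
Proof.
move=> q0 qe; apply: bla_norm_mono; apply: bla_join_lub.
  exact: bla_le_trans qe (bla_join_l _ _).
have Nq_le0 : bla_le (- q) 0 by have := bla_le_add (- q) q0; rewrite add0r subrr.
exact: bla_le_trans Nq_le0 (bla_le_trans q0 (bla_le_trans qe (bla_join_l _ _))).
Qed.

Section MulBounds.
Context {R : realType} {B : BanachLatticeAlgebra R} {a : B} {K : R}.
Hypothesis a_le : `|a| <= K.

Lemma bla_norm_mull_le z : `|bla_mul a z| <= K * `|z|.
Proof. by rewrite (le_trans (bla_mul_norm _ _)) ?ler_wpM2r. Qed.

Lemma bla_norm_mulr_le z : `|bla_mul z a| <= K * `|z|.
Proof. by rewrite (le_trans (bla_mul_norm _ _)) // mulrC ler_wpM2r. Qed.

Lemma bla_norm_mullr_le z : `|bla_mul a (bla_mul z a)| <= K * K * `|z|.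
Proof.
have K0 : 0 <= K := le_trans (normr_ge0 a) a_le.
by rewrite -mulrA (le_trans (bla_norm_mull_le _)) ?ler_wpM2l ?bla_norm_mulr_le.
Qed.

End MulBounds.

Section Coordinatewise.
Context {R : realType} {I : choiceType} {A : I -> BanachLatticeAlgebra R}.

Definition single {i : I} (z : A i) : forall j, A j := @eqtype.dfwith I A (fun j => 0) i z.

Lemma single_at {i : I} (z : A i) : single z i = z.
Proof. exact: dfwith_in. Qed.

Section Lp.
Context {p : \bar R}.
Hypothesis p_ge1 : (1 <= p)%E.

Lemma lp_sum_single {i : I} (z : A i) : lp_sum A p (single z).
Proof.
apply: (@lp_mem_single _ _ _ p_ge1 _ i) => [j ji|]; last exact: normr_ge0.
by rewrite /= /single dfwith_out ?normr0 // eq_sym.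
Qed.

Lemma lp_sum_bounded {x : forall i, A i} :
  lp_sum A p x -> exists2 K, 0 <= K & forall i, `|x i| <= K.
Proof. exact: (@lp_mem_bounded _ _ _ p_ge1 _ (fun i => normr_ge0 (x i))). Qed.

Lemma band_proj_on_prod {Q : forall i, A i -> A i} {C : R} : 0 <= C ->
    (forall i z, `|Q i z| <= C * `|z|) ->
  band_proj_on (prod_ops A) (lp_sum A p) (fun x i => Q i (x i)) <->
  forall i, band_proj_on (bla_ops (A i)) (fun _ => True) (Q i).
Proof.
move=> C0 QC; split.
- move=> [_ [QD [QZ [QQ Qpos]]]] i.
  split=> //; split; last split; last split.
  + move=> z1 z2 _ _.
    have := congr1 (fun x => x i) (QD _ _ (lp_sum_single z1) (lp_sum_single z2)).
    by rewrite /= !single_at.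
  + move=> c z _; have := congr1 (fun x => x i) (QZ c _ (lp_sum_single z)).
    by rewrite /= !single_at.
  + move=> z _; have := congr1 (fun x => x i) (QQ _ (lp_sum_single z)).
    by rewrite /= !single_at.
  + move=> z _ /= z0.
    have single_ge0 j : bla_le 0 (single z j).
      rewrite /single; have [<-|ij] := eqVneq i j; first by rewrite dfwith_in.
      by rewrite dfwith_out //; exact: bla_le_refl.
    have [Qz0 Qzz] := Qpos _ (lp_sum_single z) single_ge0.
    by move: (Qz0 i) (Qzz i); rewrite /= !single_at.
- move=> Qi; split; last split; last split; last split.
  + move=> x x_lp; apply: (@lp_mem_dominated _ _ _ p_ge1 _ _ _ C0 _ _ x_lp) => i.
      by rewrite normr_ge0 QC.
    exact: normr_ge0.
  + move=> x y _ _; apply: functional_extensionality_dep => i.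
    by case: (Qi i) => _ [QD _]; exact: QD.
  + move=> c x _; apply: functional_extensionality_dep => i.
    by case: (Qi i) => _ [_ [QZ _]]; exact: QZ.
  + move=> x _; apply: functional_extensionality_dep => i.
    by case: (Qi i) => _ [_ [_ [QQ _]]]; exact: QQ.
  + move=> x _ /= x0; split=> i; case: (Qi i) => _ [_ [_ [_ Qpos]]].
    all: by case: (Qpos _ Logic.I (x0 i)).
Qed.

Lemma pos_band_proj_on_prod {x : forall i, A i} (Q : forall i, A i -> A i) {C : R} :
    0 <= C -> (forall i z, `|Q i z| <= C * `|z|) -> lp_sum A p x ->
  lp_sum A p x /\ (forall i, bla_le 0 (x i)) /\
    band_proj_on (prod_ops A) (lp_sum A p) (fun y i => Q i (y i)) <->
  forall i, True /\ bla_le 0 (x i) /\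
    band_proj_on (bla_ops (A i)) (fun _ => True) (Q i).
Proof.
move=> C0 QC x_lp; have QP := band_proj_on_prod C0 QC; split.
- by move=> [_ [x0 Qb]] i; have := QP.1 Qb i.
- move=> H; split=> //; split; first by move=> i; case: (H i) => _ [].
  by apply/QP => i; case: (H i) => _ [].
Qed.

End Lp.

Lemma OI_on_prod (e q : forall i, A i) : (forall i, is_identity (e i)) ->
  OI_on (prod_ops A) (lp_sum A +oo%E) e q <-> forall i, OI (e i) (q i).
Proof.
move=> e_id; split.
- move=> [_ [qq [q0 qe]]] i; split=> //.
  by split; [exact: (congr1 (fun x => x i) qq) | split; [exact: q0 | exact: qe]].
- move=> Hq; split; last split; last split => i; try by case: (Hq i) => _ [_ []].
  + exists 1 => i /=; have [_ [_ [q0 qe]]] := Hq i.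
    by rewrite -(e_id i).2 bla_norm_le_of_pos.
  + by apply: functional_extensionality_dep => i; case: (Hq i) => _ [].
Qed.

End Coordinatewise.

Theorem mainTheorem19 (R : realType) (I : choiceType)
    (A : I -> BanachLatticeAlgebra R) (p : \bar R) (hp : (1 <= p)%E) :
  (forall x : forall i, A i, lp_sum A p x ->
     (BP_on (prod_ops A) (lp_sum A p) x <-> forall i, BP (x i)) /\
     (BPl_on (prod_ops A) (lp_sum A p) x <-> forall i, BPl (x i)) /\
     (BPr_on (prod_ops A) (lp_sum A p) x <-> forall i, BPr (x i))) /\
  (forall e : forall i, A i, (forall i, is_identity (e i)) ->
     forall q : forall i, A i,
       OI_on (prod_ops A) (lp_sum A +oo%E) e q <-> forall i, OI (e i) (q i)).
Proof.
split=> [x x_lp|e e_id q]; last exact: OI_on_prod.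
have [K K0 xK] := lp_sum_bounded hp x_lp.
have KK0 : 0 <= K * K := mulr_ge0 K0 K0.
split; last split.
- exact: (pos_band_proj_on_prod hp (fun i z => bla_mul (x i) (bla_mul z (x i))) KK0
    (fun i => bla_norm_mullr_le (xK i)) x_lp).
- exact: (pos_band_proj_on_prod hp (fun i z => bla_mul (x i) z) K0
    (fun i => bla_norm_mull_le (xK i)) x_lp).
- exact: (pos_band_proj_on_prod hp (fun i z => bla_mul z (x i)) K0
    (fun i => bla_norm_mulr_le (xK i)) x_lp).
Qed.
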